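(* Let $N\in\mathbb{Z}^+$ and $\boldsymbol{\mu}\in\mathbb{R}_+^N$ with $0\le\mu[n]\le1$ for all $n$, and suppose $t=\sum_{n=1}^N\mu[n]\ge1$ is not an integer. Define $m_1[n]=\big[\mu[n]-(t-\lfloor t\rfloor)\big]^+$, $m_2[n]=\big[\mu[n]-(\lceil t\rceil-t)\big]^+$, $$r=\frac{\lfloor t\rfloor(\lceil t\rceil-t)-\sum_{n} m_1[n]}{t-\sum_{n} m_1[n]-\sum_{n} m_2[n]},$$ $\boldsymbol{\mu}^{(\lfloor t\rfloor)}=\boldsymbol{m}_1+(\boldsymbol{\mu}-\boldsymbol{m}_1-\boldsymbol{m}_2)r$ and $\boldsymbol{\mu}^{(\lceil t\rceil)}=\boldsymbol{m}_2+(\boldsymbol{\mu}-\boldsymbol{m}_1-\boldsymbol{m}_2)(1-r)$. Then $\boldsymbol{\mu}^{(\lfloor t\rfloor)}$ and $\boldsymbol{\mu}^{(\lceil t\rceil)}$ are nonnegative vectors with $\boldsymbol{\mu}^{(\lfloor t\rfloor)}+\boldsymbol{\mu}^{(\lceil t\rceil)}=\boldsymbol{\mu}$, $\sum_n\mu^{(\lfloor t\rfloor)}[n]=\lfloor t\rfloor(\lceil t\rceil-t)$, $\sum_n\mu^{(\lceil t\rceil)}[n]=\lceil t\rceil(t-\lfloor t\rfloor)$, and for all $n\in[N]$, $\mu^{(\lfloor t\rfloor)}[n]\le\lceil t\rceil-t$ and $\mu^{(\lceil t\rceil)}[n]\le t-\lfloor t\rfloor$.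
   Context: $[x]^+=\max(x,0)$; vector operations are entrywise. *)

From mathcomp Require Import all_boot all_order all_algebra.
From mathcomp Require Import reals.
Set Implicit Arguments. Unset Strict Implicit. Unset Printing Implicit Defensive.
Import Order.TTheory GRing.Theory Num.Theory.
Local Open Scope ring_scope.

Definition pospart {R : realType} (x : R) : R := Num.max x 0.

Section Split.
Variables (R : realType) (N : nat) (mu : 'I_N -> R).
Definition tsum : R := \sum_(n < N) mu n.
Definition flo : R := (Num.floor tsum)%:~R.
Definition cei : R := (Num.ceil tsum)%:~R.
Definition m1 (n : 'I_N) : R := pospart (mu n - (tsum - flo)).
Definition m2 (n : 'I_N) : R := pospart (mu n - (cei - tsum)).
Definition rr : R :=
  (flo * (cei - tsum) - \sum_(n < N) m1 n) /
  (tsum - \sum_(n < N) m1 n - \sum_(n < N) m2 n).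
Definition mu_lo (n : 'I_N) : R := m1 n + (mu n - m1 n - m2 n) * rr.
Definition mu_hi (n : 'I_N) : R := m2 n + (mu n - m1 n - m2 n) * (1 - rr).
End Split.

(* Put a = t - floor t and b = ceil t - t = 1 - a.  Coordinatewise,
   gap = mu - m1 - m2 is nonnegative and m1 + gap = min(mu, b),
   m2 + gap = min(mu, a), so every r in [0, 1] yields nonnegative parts
   obeying the coordinate bounds.  Since t = floor t * b + ceil t * a, the
   ratio r lies in [0, 1] as soon as sum m1 <= floor t * b and
   sum m2 <= ceil t * a.  For a threshold s in [0, 1], if k coordinates exceed
   s then sum (mu - s)^+ is at most both k (1 - s) and t - k s; comparing k
   with floor t (resp. ceil t) gives the two bounds. *)

From mathcomp Require Import all_boot all_order all_algebra.
From mathcomp Require Import reals.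
From mathcomp Require Import ring lra.
Import Order.TTheory GRing.Theory Num.Theory.
Local Open Scope ring_scope.

Section PospartFacts.
Context {R : realType}.
Implicit Types x y s a b r p q : R.

Lemma pospart_ge0 y : 0 <= pospart y.
Proof. by rewrite /pospart le_max lexx orbT. Qed.

Lemma pospart_ge y : y <= pospart y.
Proof. by rewrite /pospart le_max lexx. Qed.

Lemma pospart_cases y : (0 <= y /\ pospart y = y) \/ (y <= 0 /\ pospart y = 0).
Proof.
rewrite /pospart; case: (lerP 0 y) => [y_ge0 | /ltW y_le0]; [left | right].
- by split => //; apply/max_idPl.
- by split => //; apply/max_idPr.
Qed.

Lemma pospart_subr_le_indicator x s : 0 <= x <= 1 ->
  pospart (x - s) <= (s < x)%R%:R * (1 - s) /\
  pospart (x - s) <= x - (s < x)%R%:R * s.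
Proof.
move=> /andP[x_ge0 x_le1]; rewrite /pospart.
case: (ltrP s x) => /= [s_lt_x | x_le_s].
- by rewrite max_l ?mul1r; [split | ]; lra.
- by rewrite max_r ?mul0r; [split | ]; lra.
Qed.

Lemma sum_pospart_subr_le {I : finType} {x : I -> R} {s} (j : int) :
  (forall i, 0 <= x i <= 1) -> 0 <= s <= 1 ->
  \sum_i pospart (x i - s) <=
    Num.max (j%:~R * (1 - s)) (\sum_i x i - (j + 1)%:~R * s).
Proof.
move=> x01 /andP[s_ge0 s_le1].
pose k := (\sum_i (s < x i)%R)%N.
have sum_le_k : \sum_i pospart (x i - s) <= k%:R * (1 - s).
  rewrite natr_sum mulr_suml; apply: ler_sum => i _.
  exact: (pospart_subr_le_indicator _ s (x01 i)).1.
have sum_le_sum_k : \sum_i pospart (x i - s) <= \sum_i x i - k%:R * s.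
  rewrite natr_sum mulr_suml -sumrB; apply: ler_sum => i _.
  exact: (pospart_subr_le_indicator _ s (x01 i)).2.
rewrite le_max; apply/orP; have [k_le_j | j_lt_k] := lerP k%:Z j; [left | right].
- have k_le_j' : k%:R <= j%:~R :> R by rewrite -[k%:R]/(k%:Z%:~R) ler_int.
  by rewrite (le_trans sum_le_k) // ler_wpM2r // subr_ge0.
- have j_lt_k' : (j + 1)%:~R <= k%:R :> R.
    by rewrite -[k%:R]/(k%:Z%:~R) ler_int lezD1.
  by rewrite (le_trans sum_le_sum_k) // lerB // ler_wpM2r.
Qed.

Lemma divr_ge0_le1 {p q} : 0 <= p <= q -> 0 <= p / q <= 1 /\ p / q * q = p.
Proof.
move=> /andP[p_ge0 p_le_q]; have [q0|q_neq0] := eqVneq q 0.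
  by move: p_le_q; rewrite q0 invr0 !mulr0 lexx ler01 => p_le0; split; last lra.
have q_gt0 : 0 < q by rewrite lt_neqAle eq_sym q_neq0 (le_trans p_ge0).
by rewrite divr_ge0 ?ler_pdivrMr ?mul1r ?divfK //=; lra.
Qed.

Lemma pospart_split_gap_ge0 {a b x} : 0 <= a -> 0 <= b -> a + b = 1 ->
  0 <= x <= 1 -> 0 <= x - pospart (x - a) - pospart (x - b).
Proof.
move=> a_ge0 b_ge0 ab1 /andP[x_ge0 x_le1].
by have [[? ->]|[? ->]] := pospart_cases (x - a);
  have [[? ->]|[? ->]] := pospart_cases (x - b); lra.
Qed.

Lemma pospart_split_bounds {a b x r} : 0 <= a -> 0 <= b -> a + b = 1 ->
  0 <= x <= 1 -> 0 <= r <= 1 ->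
  let m1 := pospart (x - a) in let m2 := pospart (x - b) in
  let gap := x - m1 - m2 in
  [/\ 0 <= m1 + gap * r, 0 <= m2 + gap * (1 - r),
      m1 + gap * r <= b & m2 + gap * (1 - r) <= a].
Proof.
move=> a_ge0 b_ge0 ab1 x01 /andP[r_ge0 r_le1] m1 m2 gap.
have gap_ge0 : 0 <= gap by apply: pospart_split_gap_ge0.
have gap_r_le : gap * r <= gap by rewrite ler_piMr.
have gap_1r_le : gap * (1 - r) <= gap by rewrite ler_piMr //; lra.
have m1_ge0 : 0 <= m1 := pospart_ge0 (x - a).
have m2_ge0 : 0 <= m2 := pospart_ge0 (x - b).
have m1_ge : x - a <= m1 := pospart_ge (x - a).
have m2_ge : x - b <= m2 := pospart_ge (x - b).
have gap_r_ge0 : 0 <= gap * r by rewrite mulr_ge0.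
have gap_1r_ge0 : 0 <= gap * (1 - r) by apply: mulr_ge0; lra.
have gapE : gap = x - m1 - m2 by [].
by split; lra.
Qed.

End PospartFacts.

Section Split.
Context {R : realType} {N : nat} {mu : 'I_N -> R}.
Hypothesis mu01 : forall n, 0 <= mu n <= 1.
Hypothesis tsum_nonint : tsum mu \notin Num.int.

Local Notation t := (tsum mu).
Local Notation f := (flo mu).
Local Notation c := (cei mu).
Local Notation S1 := (\sum_(n < N) m1 mu n).
Local Notation S2 := (\sum_(n < N) m2 mu n).

Lemma ceiE : c = f + 1.
Proof. by rewrite /cei /flo ceil_floor tsum_nonint intrD. Qed.

Lemma tsum_subr_flo_ge0 : 0 <= t - f.
Proof. by rewrite subr_ge0 floor_le. Qed.

Lemma cei_subr_tsum_ge0 : 0 <= c - t.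
Proof. by rewrite subr_ge0 ceil_ge. Qed.

Lemma tsum_frac_add : (t - f) + (c - t) = 1.
Proof. by rewrite ceiE; ring. Qed.

Lemma tsum_flo_cei : t = f * (c - t) + c * (t - f).
Proof. by rewrite ceiE; ring. Qed.

Lemma sum_m1_le : S1 <= f * (c - t).
Proof.
have a_ge0 := tsum_subr_flo_ge0; have b_ge0 := cei_subr_tsum_ge0.
have ab1 := tsum_frac_add; have c_eq := ceiE.
have a01 : 0 <= t - f <= 1 by apply/andP; lra.
have := sum_pospart_subr_le (Num.floor t) mu01 a01.
rewrite -/(tsum mu) intrD -/f le_max => /orP[] S1_le; apply: le_trans S1_le _.
all: rewrite c_eq; nra.
Qed.

Lemma sum_m2_le : S2 <= c * (t - f).
Proof.
have a_ge0 := tsum_subr_flo_ge0; have b_ge0 := cei_subr_tsum_ge0.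
have ab1 := tsum_frac_add; have c_eq := ceiE.
have b01 : 0 <= c - t <= 1 by apply/andP; lra.
have := sum_pospart_subr_le (Num.ceil t) mu01 b01.
rewrite -/(tsum mu) intrD -/c le_max => /orP[] S2_le; apply: le_trans S2_le _.
all: rewrite c_eq; nra.
Qed.

Lemma sum_split_gap : \sum_(n < N) (mu n - m1 mu n - m2 mu n) = t - S1 - S2.
Proof. by rewrite !sumrB. Qed.

Lemma rr_num_le_den : 0 <= f * (c - t) - S1 <= t - S1 - S2.
Proof.
have := sum_m1_le; have := sum_m2_le; have := tsum_flo_cei.
by move=> t_eq S2_le S1_le; apply/andP; lra.
Qed.

Lemma rr_ge0_le1 : 0 <= rr mu <= 1.
Proof. exact: (divr_ge0_le1 rr_num_le_den).1. Qed.

Lemma rr_mul_den : rr mu * (t - S1 - S2) = f * (c - t) - S1.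
Proof. exact: (divr_ge0_le1 rr_num_le_den).2. Qed.

Lemma mu_lo_add_hi n : mu_lo mu n + mu_hi mu n = mu n.
Proof. by rewrite /mu_lo /mu_hi; ring. Qed.

Lemma sum_mu_lo : \sum_(n < N) mu_lo mu n = f * (c - t).
Proof.
rewrite /mu_lo big_split /= -mulr_suml sum_split_gap mulrC rr_mul_den.
by rewrite addrC subrK.
Qed.

Lemma sum_mu_hi : \sum_(n < N) mu_hi mu n = c * (t - f).
Proof.
have sum_lo_hi : \sum_(n < N) mu_lo mu n + \sum_(n < N) mu_hi mu n = t.
  by rewrite -big_split; apply: eq_bigr => n _; exact: mu_lo_add_hi.
by apply: (addrI (f * (c - t))); rewrite -tsum_flo_cei -{1}sum_mu_lo.
Qed.

Lemma mu_lo_hi_bounds n :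
  [/\ 0 <= mu_lo mu n, 0 <= mu_hi mu n, mu_lo mu n <= c - t & mu_hi mu n <= t - f].
Proof.
exact: pospart_split_bounds tsum_subr_flo_ge0 cei_subr_tsum_ge0 tsum_frac_add (mu01 n)
  rr_ge0_le1.
Qed.

End Split.

Theorem mainTheorem8 (R : realType) (N : nat) (mu : 'I_N -> R) :
  (0 < N)%N ->
  (forall n, 0 <= mu n <= 1) ->
  1 <= tsum mu ->
  tsum mu \notin Num.int ->
  (forall n, 0 <= mu_lo mu n) /\ (forall n, 0 <= mu_hi mu n) /\
  (forall n, mu_lo mu n + mu_hi mu n = mu n) /\
  \sum_(n < N) mu_lo mu n = flo mu * (cei mu - tsum mu) /\
  \sum_(n < N) mu_hi mu n = cei mu * (tsum mu - flo mu) /\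
  (forall n, mu_lo mu n <= cei mu - tsum mu) /\
  (forall n, mu_hi mu n <= tsum mu - flo mu).
Proof.
move=> _ mu01 _ t_nonint.
have bounds := mu_lo_hi_bounds mu01 t_nonint.
split; [by move=> n; have [] := bounds n|].
split; [by move=> n; have [] := bounds n|].
split; [exact: mu_lo_add_hi|].
split; [exact: sum_mu_lo mu01 t_nonint|].
split; [exact: sum_mu_hi mu01 t_nonint|].
by split=> n; have [] := bounds n.
Qed.
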